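(* Let $G$ be an additive subgroup of $\mathbb{C}$ with $\mathrm{rank}\,G\ge 2$, and let $V$ be a nontrivial irreducible Harish-Chandra module over $\mathrm{Vir}[G]$. For any finite subset $I$ of $\mathrm{supp}V$ there is a subgroup $G_I$ of $G$ such that: (a) $G_I\cong\mathbb{Z}^k$ for some $k\in\mathbb{N}$; (b) $U(G_I)V_\mu=U(G_I)V_{\mu'}$ and $\mu-\mu'\in G_I$ for all $\mu,\mu'\in I$; (c) $V_\mu$ is an irreducible $U(G_I)_0$-module for every $\mu\in I$.
   Context: $\mathbb{N}$ denotes the positive integers. For a nonzero additive subgroup $G$ of $\mathbb{C}$, $\mathrm{Vir}[G]$ is the complex Lie algebra with basis $\{C,d_x:x\in G\}$ and brackets $[d_x,d_y]=(y-x)d_{x+y}+\delta_{x,-y}\frac{x^3-x}{12}C$, $[C,d_x]=0$; for a subgroup $H\subseteq G$, $\mathrm{Vir}[H]$ is the subalgebra spanned by $C$ and $d_x$, $x\in H$. $U(H)$ denotes the universal enveloping algebra of $\mathrm{Vir}[H]$, and for $a\in\mathbb{C}$, $U(H)_a=\{y\in U(H):[d_0,y]=ay\}$. The rank of a subgroup $A$ of $\mathbb{C}$ is the maximal $r$ such that there exist nonzero $g_1,\dots,g_r\in A$ with $\mathbb{Z}g_1+\dots+\mathbb{Z}g_r$ a direct sum ($\infty$ if no maximum exists). For a module $V$ on which $C$ acts as a scalar, $V_\lambda=\{v:d_0v=\lambda v\}$; $V$ is a weight module if it is the sum of its weight spaces, and Harish-Chandra if moreover all weight spaces are finite-dimensional;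 $\mathrm{supp}V=\{\lambda:V_\lambda\ne0\}$. $V$ is trivial if $\mathrm{Vir}[G]V=0$. *)

From HB Require Import structures.
From mathcomp Require Import all_boot all_order all_algebra.
From mathcomp Require Import reals.
From mathcomp Require Export complex.

Set Implicit Arguments.
Unset Strict Implicit.
Unset Printing Implicit Defensive.

Import Order.TTheory GRing.Theory Num.Theory.
Local Open Scope ring_scope.

(* A Vir[G]-module on which the central element C acts
   by the scalar c is encoded by the scalar c and the action d x of the basis
   vector d_x, for x in G (values of d outside G are irrelevant). *)

Section VirDefs.
Variable F : fieldType.

Definition subgroup (A : F -> Prop) : Prop :=
  A 0 /\ forall x y, A x -> A y -> A (x - y).

Definition rank_ge (A : F -> Prop) (n : nat) : Prop :=
  exists g : 'I_n -> F,
    (forall i, A (g i)) /\ (forall i, g i != 0) /\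
    (forall m : 'I_n -> int,
        \sum_(i < n) (g i *~ m i) = 0 -> forall i, g i *~ m i = 0).

Definition iso_Zk (A : F -> Prop) (k : nat) : Prop :=
  exists phi : 'rV[int]_k -> F,
    {morph phi : a b / a + b} /\ injective phi /\
    (forall x, A x <-> exists a, phi a = x).

Variable V : lmodType F.

Definition vir_module (G : F -> Prop) (c : F) (d : F -> V -> V) : Prop :=
  (forall x a u v, G x -> d x (a *: u + v) = a *: d x u + d x v) /\
  (forall x y v, G x -> G y ->
     d x (d y v) - d y (d x v) =
       (y - x) *: d (x + y) v
       + ((x == - y)%:R * ((x ^+ 3 - x) / 12%:R) * c) *: v).

Definition weight_space (d : F -> V -> V) (lam : F) (v : V) : Prop :=
  d 0 v = lam *: v.

Definition weight_module (d : F -> V -> V) : Prop :=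
  forall v : V, exists s : seq (F * V),
    (forall p, p \in s -> weight_space d p.1 p.2) /\ v = \sum_(p <- s) p.2.

Definition fin_dim (P : V -> Prop) : Prop :=
  exists s : seq V, (forall w, w \in s -> P w) /\
    forall w, P w -> exists a : seq F,
      w = \sum_(i < size s) a`_i *: s`_i.

Definition harish_chandra (d : F -> V -> V) : Prop :=
  weight_module d /\ forall lam, fin_dim (weight_space d lam).

Definition supp (d : F -> V -> V) (lam : F) : Prop :=
  exists v : V, v != 0 /\ weight_space d lam v.

Definition nontrivial (G : F -> Prop) (c : F) (d : F -> V -> V) : Prop :=
  exists v : V, c *: v != 0 \/ exists x, G x /\ d x v != 0.

Definition subspace (W : V -> Prop) : Prop :=
  W 0 /\ forall a u v, W u -> W v -> W (a *: u + v).

(* submodule (C acts as a scalar, so stability under C is automatic) *)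
Definition submodule (G : F -> Prop) (d : F -> V -> V) (W : V -> Prop) : Prop :=
  subspace W /\ forall x v, G x -> W v -> W (d x v).

Definition irreducible (G : F -> Prop) (d : F -> V -> V) : Prop :=
  (exists v : V, v != 0) /\
  forall W, submodule G d W -> (forall v, W v -> v = 0) \/ (forall v, W v).

Definition act_word (d : F -> V -> V) (xs : seq F) (v : V) : V :=
  foldr (fun x w => d x w) v xs.

(* U(H) W : the span of all u.w, u in U(H), w in W (U(H) is spanned by the
   monomials in C and the d_x, x in H; C acts by a scalar) *)
Definition Uact (H : F -> Prop) (d : F -> V -> V) (W : V -> Prop) (v : V) : Prop :=
  exists s : seq (F * seq F * V),
    (forall t, t \in s -> (forall x, x \in t.1.2 -> H x) /\ W t.2) /\
    v = \sum_(t <- s) t.1.1 *: act_word d t.1.2 t.2.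

(* V_mu is an irreducible U(H)_0-module: U(H)_0 is spanned by the monomials
   d_{x_1}...d_{x_n} C^j with x_i in H and x_1 + ... + x_n = 0 *)
Definition irreducible_U0 (H : F -> Prop) (d : F -> V -> V) (mu : F) : Prop :=
  (exists v : V, v != 0 /\ weight_space d mu v) /\
  forall W : V -> Prop,
    (forall v, W v -> weight_space d mu v) ->
    subspace W ->
    (forall xs v, (forall x, x \in xs -> H x) -> \sum_(x <- xs) x = 0 ->
        W v -> W (act_word d xs v)) ->
    (forall v, W v -> v = 0) \/ (forall v, weight_space d mu v -> W v).

End VirDefs.

(* For a pair of weights mu, mu' in I, each required property already holds for
   every H containing a suitable finite subset of G.  First, mu - mu' lies in G,
   because V = U(G) V_mu' and U(G) shifts weights by elements of G.  Second, a
   spanning family of V_mu' lies in U(G) V_mu, and each of its vectors is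
   reached with finitely many d_x.  Third, V_mu is finite-dimensional, so the
   operators induced on it by U(G)_0 span a finite-dimensional space spanned by
   finitely many zero-weight monomials; a subspace of V_mu stable under these
   is stable under U(G)_0, and by irreducibility of V and projection onto the
   weight mu it is then 0 or V_mu.  G_I is the subgroup generated by all these
   finitely many elements and one nonzero element of G.  A finitely generated
   subgroup of a field of characteristic 0 embeds into some Z^m, and subgroups
   of Z^m are free, so G_I is isomorphic to Z^k with k > 0. *)

From HB Require Import structures.
From mathcomp Require Import all_boot all_order all_algebra.
From mathcomp Require Import reals complex.
From mathcomp Require Import boolp.

Set Implicit Arguments.
Unset Strict Implicit.
Unset Printing Implicit Defensive.

Import Order.TTheory GRing.Theory Num.Theory.
Local Open Scope ring_scope.

Definition all_in (T : eqType) (A : T -> Prop) (s : seq T) := forall x, x \in s -> A x.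

Lemma all_in_cons (T : eqType) (A : T -> Prop) x s :
  all_in A (x :: s) <-> A x /\ all_in A s.
Proof.
split=> [hs|[hx hs] y]; last by rewrite inE => /predU1P [->|/hs].
by split=> [|y ys]; apply: hs; rewrite inE ?eqxx ?ys ?orbT.
Qed.

Lemma all_in_cat (T : eqType) (A : T -> Prop) s1 s2 :
  all_in A (s1 ++ s2) <-> all_in A s1 /\ all_in A s2.
Proof.
split=> [hs|[hs1 hs2] x]; last by rewrite mem_cat => /orP [/hs1|/hs2].
by split=> x xs; apply: hs; rewrite mem_cat xs ?orbT.
Qed.

(** * Free abelian groups *)

Section Subgroups.
Variable M : zmodType.

Definition is_subgroup (A : M -> Prop) := A 0 /\ forall x y, A x -> A y -> A (x - y).

Definition isoZ (A : M -> Prop) (k : nat) :=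
  exists phi : 'rV[int]_k -> M,
    {morph phi : a b / a + b} /\ injective phi /\ (forall x, A x <-> exists a, phi a = x).

Variable A : M -> Prop.
Hypothesis sgA : is_subgroup A.

Lemma subgroup0 : A 0. Proof. by case: sgA. Qed.

Lemma subgroupB x y : A x -> A y -> A (x - y). Proof. by case: sgA => _; apply. Qed.

Lemma subgroupN x : A x -> A (- x).
Proof. by rewrite -sub0r; apply: subgroupB; first exact: subgroup0. Qed.

Lemma subgroupD x y : A x -> A y -> A (x + y).
Proof. by move=> Ax /subgroupN; rewrite -{2}[y]opprK; apply: subgroupB. Qed.

Lemma subgroupMz x n : A x -> A (x *~ n).
Proof.
have subgroupMn m : A x -> A (x *+ m).
  elim: m => [|m IH] Ax; first by rewrite mulr0n; apply: subgroup0.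
  by rewrite mulrS; apply: subgroupD => //; apply: IH.
case: n => m Ax; first exact: subgroupMn.
by rewrite NegzE mulrNz; apply: subgroupN; apply: subgroupMn.
Qed.

Lemma subgroup_sum s : all_in A s -> A (\sum_(x <- s) x).
Proof.
elim: s => [|x s IH]; first by rewrite big_nil => _; apply: subgroup0.
by case/all_in_cons => Ax As; rewrite big_cons; apply: subgroupD => //; apply: IH.
Qed.

End Subgroups.

Section AdditiveRowMaps.
Variables (M : zmodType) (m : nat) (f : 'rV[int]_m -> M).
Hypothesis fD : {morph f : a b / a + b}.

Lemma morph_add0 : f 0 = 0.
Proof. by apply: (@addrI _ (f 0)); rewrite -fD !addr0. Qed.

Lemma morph_addN a : f (- a) = - f a.
Proof. by apply: (@addrI _ (f a)); rewrite -fD !subrr morph_add0. Qed.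

Lemma morph_addB a b : f (a - b) = f a - f b.
Proof. by rewrite fD morph_addN. Qed.

Lemma morph_addMz a n : f (a *~ n) = f a *~ n.
Proof.
have morph_addMn k : f (a *+ k) = f a *+ k.
  by elim: k => [|k IH]; [rewrite !mulr0n morph_add0 | rewrite !mulrS fD IH].
by case: n => k; rewrite ?NegzE ?mulrNz ?morph_addN morph_addMn.
Qed.

End AdditiveRowMaps.

Lemma int_subgroup_dvd (D : int -> Prop) :
  is_subgroup D -> exists n : int, forall t, D t <-> (n %| t)%Z.
Proof.
move=> sgD; case: (pselect (exists t, D t /\ t != 0)) => [[t0 [Dt0 t0nz]]|D0]; last first.
  exists 0 => t; rewrite dvd0z; split=> [Dt|/eqP ->]; last exact: subgroup0 sgD.
  by apply/eqP; apply: contrapT => /eqP tnz; apply: D0; exists t.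
pose P n := (0 < n)%N && `[< D n%:Z >].
have [|n /andP [n_gt0 /asboolP Dn] n_min] := @ex_minnP P.
  exists `|t0|%N; rewrite /P absz_gt0 t0nz; apply/asboolP.
  by case: (ltrP t0 0) => [/ltW/lez0_abs|/gez0_abs] ->; first apply: (subgroupN sgD).
exists n => t; split=> [Dt|/dvdzP [q ->]]; last by rewrite mulrC -mulrzz; apply: (subgroupMz sgD).
apply/dvdz_mod0P; apply: contrapT => /eqP rnz.
have n_pos : (0 < n%:Z) by rewrite ltz_nat.
have r_ge0 := modz_ge0 t (lt0r_neq0 n_pos).
have Dr : D (t %% n)%Z.
  have -> : (t %% n)%Z = t - (t %/ n)%Z * n by rewrite {2}(divz_eq t n) addrAC subrr add0r.
  by apply: (subgroupB sgD) => //; rewrite mulrC -mulrzz; apply: (subgroupMz sgD).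
have : (n <= `|(t %% n)%Z|)%N.
  by apply: n_min; rewrite /P absz_gt0 rnz; apply/asboolP; rewrite gez0_abs.
by rewrite -lez_nat gez0_abs // leNgt ltz_pmod.
Qed.

Section RowHead.
Variable n : nat.
Implicit Types (x : 'rV[int]_(1 + n)).

Definition rhead x : int := lsubmx x 0 0.

Lemma rheadD x y : rhead (x + y) = rhead x + rhead y.
Proof. by rewrite /rhead !mxE. Qed.

Lemma rheadZ (q : int) x : rhead (q *: x) = q * rhead x.
Proof. by rewrite /rhead !mxE. Qed.

Lemma rhead_row_mx (a : 'M[int]_1) (y : 'rV_n) : rhead (row_mx a y) = a 0 0.
Proof. by rewrite /rhead row_mxKl. Qed.

Lemma row_mx_rhead x : x = row_mx (const_mx (rhead x)) (rsubmx x).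
Proof.
rewrite -{1}(hsubmxK x); congr row_mx; apply/matrixP => i j.
by rewrite !mxE !ord1 /rhead mxE.
Qed.

Lemma rhead0_row_mx x : rhead x = 0 -> x = row_mx 0 (rsubmx x).
Proof.
by move=> x0; rewrite {1}(row_mx_rhead x) x0; congr row_mx; apply/matrixP => i j; rewrite !mxE.
Qed.

End RowHead.

Section RowSubgroups.
Variable n : nat.
Implicit Types (x : 'rV[int]_(1 + n)) (H : 'rV[int]_(1 + n) -> Prop).

Definition head0_slice H (y : 'rV[int]_n) := H (row_mx 0 y).

Lemma isoZ_rhead0 H j :
  isoZ (head0_slice H) j -> (forall x, H x -> rhead x = 0) -> isoZ H j.
Proof.
move=> [phi [phiD [phiI phiH]]] H_rhead0.
exists (fun a => row_mx 0 (phi a)); split; last split.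
- by move=> a b /=; rewrite phiD add_row_mx addr0.
- by move=> a b /eq_row_mx [_ /phiI].
move=> x; split=> [Hx|[a <-]]; last by apply/phiH; exists a.
have x_slice := rhead0_row_mx (H_rhead0 x Hx).
have [|a phia] := (phiH (rsubmx x)).1; first by rewrite /head0_slice -x_slice.
by exists a; rewrite phia -x_slice.
Qed.

Lemma isoZ_rhead_dvd H j h0 : is_subgroup H ->
  isoZ (head0_slice H) j -> H h0 -> rhead h0 != 0 ->
  (forall x, H x -> (rhead h0 %| rhead x)%Z) -> isoZ H (1 + j).
Proof.
move=> sgH [phi [phiD [phiI phiH]]] Hh0 h0nz H_dvd.
pose psi (a : 'rV_(1 + j)) := rhead a *: h0 + row_mx 0 (phi (rsubmx a)).
have rhead_psi a : rhead (psi a) = rhead a * rhead h0.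
  by rewrite rheadD rheadZ rhead_row_mx mxE addr0.
have H_psi a : H (psi a).
  apply: subgroupD => //; first by rewrite -[rhead a]intz scaler_int; apply: subgroupMz.
  by apply/phiH; exists (rsubmx a).
exists psi; split; last split.
- move=> a b; rewrite /psi rheadD scalerDl linearD /= phiD.
  by rewrite -{1}(addr0 (0 : 'M[int]_1)) -add_row_mx addrACA.
- move=> a b psi_ab.
  have ab_head : rhead a = rhead b.
    by apply: (mulIf h0nz); rewrite -!rhead_psi psi_ab.
  move: psi_ab; rewrite /psi ab_head => /addrI /eq_row_mx [_ /phiI ab_tail].
  by rewrite (row_mx_rhead a) (row_mx_rhead b) ab_head ab_tail.
move=> x; split=> [Hx|[a <-] //].
have [q xq] := dvdzP (H_dvd x Hx).
set y := x - q *: h0.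
have Hy : H y by apply: subgroupB => //; rewrite -[q]intz scaler_int; apply: subgroupMz.
have y_head : rhead y = 0 by rewrite rheadD -scaleN1r !rheadZ xq mulN1r mulrC subrr.
have [|a phia] := (phiH (rsubmx y)).1; first by rewrite /head0_slice -rhead0_row_mx.
exists (row_mx (const_mx q) a).
by rewrite /psi rhead_row_mx row_mxKr mxE phia -rhead0_row_mx // addrC subrK.
Qed.

End RowSubgroups.

Lemma isoZ_rV_subgroup k (H : 'rV[int]_k -> Prop) : is_subgroup H -> exists j, isoZ H j.
Proof.
elim: k H => [|k IH] H sgH.
  exists 0%N, id; do 2!split=> //; move=> x; split=> [_|_]; first by exists x.
  by rewrite thinmx0; apply: subgroup0.
have [|j slice_iso] := IH (head0_slice H).
  split=> [|x y]; first by rewrite /head0_slice row_mx0; apply: subgroup0.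
  rewrite /head0_slice => Hx Hy.
  have -> : row_mx 0 (x - y) = row_mx 0 x - row_mx (0 : 'M_1) y.
    by rewrite opp_row_mx add_row_mx subr0.
  exact: subgroupB.
pose D t := exists2 x, H x & @rhead k x = t.
have sgD : is_subgroup D.
  split=> [|_ _ [x Hx <-] [y Hy <-]]; first by exists 0; [apply: subgroup0 | rewrite /rhead !mxE].
  by exists (x - y); [apply: subgroupB | rewrite rheadD -scaleN1r rheadZ mulN1r].
have [dd D_dvd] := int_subgroup_dvd sgD.
have [h0 Hh0 h0_head] : D dd by apply/D_dvd.
have H_dvd x : H x -> (dd %| rhead x)%Z by move=> Hx; apply/D_dvd; exists x.
have [dd0|ddnz] := eqVneq dd 0.
  exists j; apply: isoZ_rhead0 slice_iso _ => x /H_dvd.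
  by rewrite dd0 dvd0z => /eqP.
by exists (1 + j)%N; apply: isoZ_rhead_dvd Hh0 _ _ => //; rewrite h0_head.
Qed.

Lemma isoZ_embedded (M : zmodType) m (psi : 'rV[int]_m -> M) (A : M -> Prop) :
  {morph psi : a b / a + b} -> injective psi -> is_subgroup A ->
  (forall x, A x -> exists e, psi e = x) -> exists j, isoZ A j.
Proof.
move=> psiD psiI sgA A_psi.
have [|j [phi [phiD [phiI phiH]]]] := @isoZ_rV_subgroup m (fun e => A (psi e)).
  split=> [|x y Ax Ay]; first by rewrite morph_add0 //; apply: subgroup0.
  by rewrite morph_addB //; apply: subgroupB.
exists j, (fun a => psi (phi a)); split; last split.
- by move=> a b /=; rewrite phiD psiD.
- by move=> a b /psiI /phiI.
move=> x; split=> [Ax|[a <-]]; last by apply/phiH; exists a.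
have [e psie] := A_psi x Ax.
have [|a phia] := (phiH e).1; first by rewrite psie.
by exists a; rewrite phia.
Qed.

Fixpoint zspan (M : zmodType) (S : seq M) (x : M) : Prop :=
  if S is s :: S' then exists (t : int) y, zspan S' y /\ x = s *~ t + y else x = 0.

Lemma zspan_subgroup (M : zmodType) (S : seq M) : is_subgroup (zspan S).
Proof.
elim: S => [|s S [IH0 IHB]] /=; first by split=> // x y -> ->; rewrite subr0.
split; first by exists 0, 0; rewrite mulr0z addr0.
move=> _ _ [t [y [Sy ->]]] [t' [y' [Sy' ->]]].
by exists (t - t'), (y - y'); split; [apply: IHB | rewrite mulrzBr opprD addrACA].
Qed.

Lemma mem_zspan (M : zmodType) (S : seq M) x : x \in S -> zspan S x.
Proof.
elim: S => [|s S IH] //=; rewrite inE => /predU1P [->|Sx].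
  by exists 1, 0; split; [apply: subgroup0 (zspan_subgroup S) | rewrite addr0].
by exists 0, x; rewrite mulr0z add0r; split; first exact: IH.
Qed.

Lemma zspan_min (M : zmodType) (A : M -> Prop) (S : seq M) :
  is_subgroup A -> all_in A S -> forall x, zspan S x -> A x.
Proof.
move=> sgA; elim: S => [|s S IH] /=; first by move=> _ x ->; apply: subgroup0.
case/all_in_cons => As AS x [t [y [Sy ->]]].
by apply: subgroupD => //; [apply: subgroupMz | apply: IH].
Qed.

Lemma zspan_embedded (K : numFieldType) (S : seq K) :
  exists m (psi : 'rV[int]_m -> K),
    [/\ {morph psi : a b / a + b}, injective psi & forall x, zspan S x -> exists e, psi e = x].
Proof.
elim: S => [|s S [m [psi [psiD psiI psiS]]]].
  exists 0%N, (fun=> 0); split=> [a b|a b _|x ->]; first by rewrite addr0.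
    by rewrite (thinmx0 a) (thinmx0 b).
  by exists 0.
case: (pselect (exists n : int, n != 0 /\ exists e, psi e = s *~ n)).
  (* a multiple of s is already in the lattice: refine the lattice by 1/n *)
  move=> [n [nnz [e0 psie0]]].
  have nR : n%:~R != 0 :> K by rewrite intr_eq0.
  exists m, (fun e => psi e / n%:~R); split.
  - by move=> a b; rewrite psiD mulrDl.
  - by move=> a b /(mulIf (invr_neq0 nR)) /psiI.
  move=> _ [t [y [Sy ->]]]; have [ey <-] := psiS _ Sy.
  exists (e0 *~ t + ey *~ n); rewrite psiD (morph_addMz psiD) (morph_addMz psiD) psie0.
  by rewrite mulrDl mulrzAC -[s *~ t *~ n]mulrzr -[psi ey *~ n]mulrzr !mulfK.
move=> s_free; exists (1 + m)%N, (fun e => s *~ rhead e + psi (rsubmx e)); split.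
- by move=> a b; rewrite rheadD mulrzDr linearD /= psiD addrACA.
- move=> a b /= ab.
  have ab_head : rhead a = rhead b.
    apply/eqP; apply: contraT; rewrite -subr_eq0 => abnz; exfalso; apply: s_free.
    exists (rhead a - rhead b); split => //; exists (rsubmx b - rsubmx a).
    rewrite morph_addB // mulrzBr; apply/eqP; rewrite subr_eq addrAC eq_sym subr_eq.
    by rewrite ab addrC.
  move: ab; rewrite ab_head => /addrI /psiI ab_tail.
  by rewrite (row_mx_rhead a) (row_mx_rhead b) ab_head ab_tail.
move=> _ [t [y [Sy ->]]]; have [ey <-] := psiS _ Sy.
by exists (row_mx (const_mx t) ey); rewrite rhead_row_mx mxE row_mxKr.
Qed.

Lemma zspan_isoZ (K : numFieldType) (S : seq K) : exists j, isoZ (zspan S) j.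
Proof.
have [m [psi [psiD psiI psiS]]] := zspan_embedded S.
exact: isoZ_embedded psiD psiI (zspan_subgroup S) psiS.
Qed.

Lemma isoZ0_eq0 (M : zmodType) (A : M -> Prop) x : isoZ A 0 -> A x -> x = 0.
Proof.
by move=> [phi [phiD [_ phiA]]] /phiA [a <-]; rewrite (thinmx0 a) morph_add0.
Qed.

(** * Weight modules over Vir[G] *)

Section LinearEndo.
Variables (R : pzRingType) (V : lmodType R) (f : V -> V).
Hypothesis fL : linear f.

Lemma lin0 : f 0 = 0.
Proof.
have := fL 1 0 0; rewrite scaler0 addr0 scale1r => f00.
by apply: (@addrI _ (f 0)); rewrite addr0 -f00.
Qed.

Lemma linD u v : f (u + v) = f u + f v.
Proof. by have := fL 1 u v; rewrite !scale1r. Qed.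

Lemma linZ a u : f (a *: u) = a *: f u.
Proof. by have := fL a u 0; rewrite !addr0 lin0 addr0. Qed.

Lemma lin_sum (I : Type) (r : seq I) (P : pred I) (E : I -> V) :
  f (\sum_(i <- r | P i) E i) = \sum_(i <- r | P i) f (E i).
Proof. exact: (big_morph f linD lin0). Qed.

End LinearEndo.

Section Subspaces.
Variables (F : fieldType) (V : lmodType F) (W : V -> Prop).
Hypothesis sW : subspace W.

Lemma subspace0 : W 0. Proof. by case: sW. Qed.

Lemma subspaceD u v : W u -> W v -> W (u + v).
Proof. by case: sW => _ WL Wu Wv; rewrite -[u]scale1r; apply: WL. Qed.

Lemma subspaceZ a u : W u -> W (a *: u).
Proof. by case: sW => W0 WL Wu; rewrite -[_ *: _]addr0; apply: WL. Qed.

Lemma subspace_sum (I : Type) (r : seq I) (P : pred I) (E : I -> V) :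
  (forall i, P i -> W (E i)) -> W (\sum_(i <- r | P i) E i).
Proof. by move=> WE; apply: big_ind => //; [apply: subspace0 | apply: subspaceD]. Qed.

End Subspaces.

Section VirasoroModule.
Variables (F : fieldType) (V : lmodType F) (G : F -> Prop) (c : F) (d : F -> V -> V).
Hypothesis sgG : subgroup G.
Hypothesis dvir : vir_module G c d.

Local Notation Wt := (weight_space d).

Let G0 : G 0 := subgroup0 sgG.

Lemma d_linear x : G x -> linear (d x).
Proof. by case: dvir => dL _ Gx a u v; apply: dL. Qed.

Lemma act_word_linear w : all_in G w -> linear (act_word d w).
Proof.
elim: w => [|x w IH] //= /all_in_cons [Gx Gw] a u v.
by rewrite /= (IH Gw) d_linear.
Qed.

Lemma weight_space_subspace mu : subspace (Wt mu).
Proof.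
split=> [|a u v]; first by rewrite /weight_space (lin0 (d_linear G0)) scaler0.
by rewrite /weight_space (d_linear G0) => -> ->; rewrite scalerDr !scalerA mulrC.
Qed.

(* the bracket relation for d_0 and d_x reads [d_0, d_x] = x d_x *)
Lemma d_weight x lam v : G x -> Wt lam v -> Wt (lam + x) (d x v).
Proof.
move=> Gx Wv; rewrite /weight_space; case: dvir => _ /(_ 0 x v G0 Gx).
rewrite expr0n /= subr0 subrr mul0r mulr0 mul0r scale0r addr0 add0r.
move/eqP; rewrite subr_eq => /eqP ->.
by rewrite Wv (linZ (d_linear Gx)) scalerDl addrC.
Qed.

Lemma act_word_weight w lam v :
  all_in G w -> Wt lam v -> Wt (lam + \sum_(x <- w) x) (act_word d w v).
Proof.
elim: w => [|x w IH] /=; first by rewrite big_nil addr0.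
case/all_in_cons => Gx Gw Wv; rewrite big_cons addrCA addrC.
by apply: d_weight => //; apply: IH.
Qed.

Lemma weight_sum_eq0 (I : eqType) (s : seq I) (lam : I -> F) (u : I -> V) mu v :
  (forall i, i \in s -> Wt (lam i) (u i) /\ lam i != mu) ->
  Wt mu v -> v = \sum_(i <- s) u i -> v = 0.
Proof.
elim: s u v => [|i s IH] u v hs Wv v_sum; subst v; first by rewrite big_nil.
have [Wi lamnz] := hs i (mem_head i s).
have {}hs j : j \in s -> Wt (lam j) (u j) /\ lam j != mu.
  by move=> js; apply: hs; rewrite inE js orbT.
pose u' j := (lam j - lam i) *: u j.
(* applying d_0 - lam i kills the first summand *)
have u'_sum : (mu - lam i) *: \sum_(j <- i :: s) u j = \sum_(j <- s) u' j.
  rewrite scalerBl -Wv big_cons (linD (d_linear G0)) Wi (lin_sum (d_linear G0)).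
  rewrite scalerDr opprD addrACA subrr add0r scaler_sumr -sumrB.
  apply: eq_big_seq => j js; have [Wj _] := hs j js.
  by rewrite Wj /u' scalerBl.
have scaled0 : (mu - lam i) *: \sum_(j <- i :: s) u j = 0.
  apply: (IH u' _ _ _ u'_sum).
    move=> j js; have [Wj lamj] := hs j js.
    by split=> //; exact: (subspaceZ (weight_space_subspace _) (lam j - lam i) Wj).
  exact: (subspaceZ (weight_space_subspace mu) (mu - lam i) Wv).
by move/eqP: scaled0; rewrite scaler_eq0 subr_eq0 eq_sym (negbTE lamnz) => /eqP.
Qed.

Lemma weight_component (I : eqType) (s : seq I) (lam : I -> F) (u : I -> V) mu v :
  (forall i, i \in s -> Wt (lam i) (u i)) -> Wt mu v -> v = \sum_(i <- s) u i ->
  v = \sum_(i <- s | lam i == mu) u i.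
Proof.
move=> Wu Wv v_sum; apply/eqP; rewrite -subr_eq0; apply/eqP.
apply: (@weight_sum_eq0 _ [seq i <- s | lam i != mu] lam u mu).
- by move=> i; rewrite mem_filter => /andP [lamnz si]; split => //; apply: Wu.
- rewrite -scaleN1r; apply: (subspaceD (weight_space_subspace mu) Wv).
  apply: (subspaceZ (weight_space_subspace mu)).
  rewrite big_seq_cond; apply: (subspace_sum (weight_space_subspace mu)).
  by move=> i /andP [si /eqP <-]; apply: Wu.
- by rewrite big_filter v_sum (bigID (fun i => lam i == mu)) /= addrAC subrr add0r.
Qed.

Section GeneratedSubspace.
Variables (H : F -> Prop) (W : V -> Prop).

Lemma Uact_subspace : subspace (Uact H d W).
Proof.
split=> [|a _ _ [su [hsu ->]] [sv [hsv ->]]]; first by exists [::]; rewrite big_nil.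
exists ([seq (a * t.1.1, t.1.2, t.2) | t <- su] ++ sv); split.
  by move=> t; rewrite mem_cat => /orP [/mapP [t' /hsu ? ->]|/hsv].
rewrite big_cat big_map /= scaler_sumr; congr (_ + _).
by apply: eq_bigr => t _; rewrite scalerA.
Qed.

Lemma Uact_base v : W v -> Uact H d W v.
Proof.
move=> Wv; exists [:: (1, [::], v)]; rewrite big_seq1 scale1r; split => //.
by move=> t; rewrite inE => /eqP ->.
Qed.

Hypothesis HG : forall x, H x -> G x.

Lemma Uact_act_word w v : all_in H w -> Uact H d W v -> Uact H d W (act_word d w v).
Proof.
move=> Hw [s [hs ->]]; exists [seq (t.1.1, w ++ t.1.2, t.2) | t <- s]; split.
  move=> _ /mapP [t /hs [Ht Wt] ->]; split=> //=.
  by apply/all_in_cat; split.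
have Gw : all_in G w by move=> x /Hw /HG.
rewrite (lin_sum (act_word_linear Gw)) big_map; apply: eq_bigr => t _ /=.
by rewrite (linZ (act_word_linear Gw)) /act_word foldr_cat.
Qed.

End GeneratedSubspace.

Lemma Uact_trans H W W' v : (forall x, H x -> G x) ->
  (forall w, W w -> Uact H d W' w) -> Uact H d W v -> Uact H d W' v.
Proof.
move=> HG WW' [s [hs ->]]; rewrite big_seq.
apply: (subspace_sum (Uact_subspace H W')) => t /hs [Ht Wt].
by apply: (subspaceZ (Uact_subspace H W')); apply: Uact_act_word => //; apply: WW'.
Qed.

Lemma Uact_full W w : irreducible G d -> W w -> w != 0 -> forall v, Uact G d W v.
Proof.
move=> [_ irrV] Ww wnz.
have Usub : submodule G d (Uact G d W).
  split=> [|x v Gx Uv]; first exact: Uact_subspace.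
  apply: (@Uact_act_word _ _ (fun _ Gy => Gy) [:: x]) => // y.
  by rewrite inE => /eqP ->.
case: (irrV _ Usub) => [W0|//].
by move: wnz; rewrite (W0 w) ?eqxx //; apply: Uact_base.
Qed.

Lemma Uact_weight_component lam mu W (s : seq (F * seq F * V)) v :
  (forall w, W w -> Wt lam w) -> (forall t, t \in s -> all_in G t.1.2 /\ W t.2) ->
  Wt mu v -> v = \sum_(t <- s) t.1.1 *: act_word d t.1.2 t.2 ->
  v = \sum_(t <- s | lam + \sum_(x <- t.1.2) x == mu) t.1.1 *: act_word d t.1.2 t.2.
Proof.
move=> Wlam hs Wv v_sum.
apply: (weight_component (lam := fun t => lam + \sum_(x <- t.1.2) x)) Wv v_sum.
move=> t /hs [Gt Wt]; apply: (subspaceZ (weight_space_subspace _)).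
by apply: act_word_weight => //; apply: Wlam.
Qed.

Lemma weight_space_generated mu W : irreducible G d ->
  (forall w, W w -> Wt mu w) -> subspace W ->
  (forall w v, all_in G w -> \sum_(x <- w) x = 0 -> W v -> W (act_word d w v)) ->
  forall w, W w -> w != 0 -> forall v, Wt mu v -> W v.
Proof.
move=> irrV Wmu sW W_closed w Ww wnz v Wv.
have [s [hs v_sum]] := Uact_full irrV Ww wnz v.
rewrite (Uact_weight_component Wmu hs Wv v_sum) big_seq_cond.
apply: (subspace_sum sW) => t /andP [/hs [Gt Wt] /eqP t_mu].
apply: (subspaceZ sW); apply: W_closed => //.
by apply: (@addrI _ mu); rewrite addr0.
Qed.

Lemma supp_subG mu mu' : irreducible G d -> supp d mu -> supp d mu' -> G (mu - mu').
Proof.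
move=> irrV [v [vnz Wv]] [w [wnz Ww]].
have [s [hs v_sum]] := Uact_full irrV Ww wnz v.
have v_mu := Uact_weight_component (fun _ Ww' => Ww') hs Wv v_sum.
case: (boolP (has (fun t => mu' + \sum_(x <- t.1.2) x == mu) s)).
  case/hasP => t st /eqP <-; rewrite addrAC subrr add0r.
  by have [Gt _] := hs t st; apply: subgroup_sum.
move/hasPn => none; move: vnz; rewrite v_mu big_seq_cond big_pred0 ?eqxx // => t /=.
by case: (boolP (t \in s)) => //= st; apply: negbTE (none t st).
Qed.

End VirasoroModule.

(** * Finite-dimensional weight spaces *)

Lemma finite_spanning_family (F : fieldType) (T : eqType) n (P : T -> Prop)
    (f : T -> 'rV[F]_n) :
  exists2 s : seq T, all_in P s &
    forall t, P t -> exists cf : 'I_(size s) -> F,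
      f t = \sum_(k < size s) cf k *: f (tnth (in_tuple s) k).
Proof.
pose span (s : seq T) := \matrix_(k < size s) f (tnth (in_tuple s) k).
pose good r := `[< exists2 s, all_in P s & \rank (span s) = r >].
have good0 : exists r, good r.
  by exists 0%N; apply/asboolP; exists [::]; rewrite ?(flatmx0 (span [::])) ?mxrank0.
have good_le r : good r -> (r <= n)%N by case/asboolP => s _ <-; apply: rank_leq_col.
have [r /asboolP [s Ps rk_s] r_max] := ex_maxnP good0 good_le.
exists s => // t Pt.
have row_span (s' : seq T) k : row k (span s') = f (nth t s' k).
  by rewrite rowK (tnth_nth t).
have sub_s : (span s <= span (t :: s))%MS.
  apply/row_subP => k; rewrite row_span.
  by rewrite -[nth t s k]/(nth t (t :: s) (lift ord0 k)) -row_span row_sub.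
have sub_ts : (span (t :: s) <= span s)%MS.
  have [_ <-] := mxrank_leqif_sup sub_s; rewrite rk_s eqn_leq -{1}rk_s mxrankS //.
  by apply: r_max; apply/asboolP; exists (t :: s) => //; apply/all_in_cons.
have /submxP [D ->] : (f t <= span s)%MS.
  apply: submx_trans sub_ts.
  by rewrite -[f t]/(f (nth t (t :: s) (@ord0 (size s)))) -row_span row_sub.
exists (fun k => D 0 k).
by rewrite mulmx_sum_row; apply: eq_bigr => k _; rewrite rowK.
Qed.

Definition zero_weight_word (F : fieldType) (H : F -> Prop) (w : seq F) :=
  all_in H w /\ \sum_(x <- w) x = 0.

Section WeightSpaceWords.
Variables (F : fieldType) (V : lmodType F) (G : F -> Prop) (c : F) (d : F -> V -> V).
Hypothesis sgG : subgroup G.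
Hypothesis dvir : vir_module G c d.

Local Notation Wt := (weight_space d).

Variables (mu : F) (sp : seq V).
Hypothesis sp_mu : all_in (Wt mu) sp.
Hypothesis sp_span :
  forall v, Wt mu v -> exists a : seq F, v = \sum_(i < size sp) a`_i *: sp`_i.

Definition word_matrix (w : seq F) (M : 'M[F]_(size sp)) :=
  forall j : 'I_(size sp), act_word d w sp`_j = \sum_(i < size sp) M j i *: sp`_i.

Lemma word_matrix_exists w : zero_weight_word G w -> exists M, word_matrix w M.
Proof.
move=> [Gw w0].
have /fin_all_exists [a wa] : forall j : 'I_(size sp),
    exists a : seq F, act_word d w sp`_j = \sum_(i < size sp) a`_i *: sp`_i.
  move=> j; apply: sp_span.
  by have := act_word_weight sgG dvir Gw (sp_mu (mem_nth 0 (ltn_ord j))); rewrite w0 addr0.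
by exists (\matrix_(j, i) (a j)`_i) => j; rewrite wa; apply: eq_bigr => i _; rewrite mxE.
Qed.

Lemma eq_on_weight_space (f g : V -> V) : linear f -> linear g ->
  (forall j : 'I_(size sp), f sp`_j = g sp`_j) -> forall v, Wt mu v -> f v = g v.
Proof.
move=> fL gL fg v /sp_span [a ->]; rewrite (lin_sum fL) (lin_sum gL).
by apply: eq_bigr => j _; rewrite (linZ fL) (linZ gL) fg.
Qed.

Lemma zero_weight_words_finite : exists2 ws : seq (seq F),
  all_in (zero_weight_word G) ws &
  forall W, subspace W -> (forall v, W v -> Wt mu v) ->
    (forall w v, w \in ws -> W v -> W (act_word d w v)) ->
  forall w v, zero_weight_word G w -> W v -> W (act_word d w v).
Proof.
have [s s_ok s_span] := finite_spanning_family
  (fun t : seq F * 'M[F]_(size sp) => zero_weight_word G t.1 /\ word_matrix t.1 t.2)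
  (fun t => mxvec t.2).
exists [seq t.1 | t <- s]; first by move=> _ /mapP [t /s_ok [zt _] ->].
move=> W sW W_mu W_ws w v zw Wv.
have [M wM] := word_matrix_exists zw; have [cf Mcf] := s_span (w, M) (conj zw wM).
pose t_ k := tnth (in_tuple s) k.
have t_ok k : zero_weight_word G (t_ k).1 /\ word_matrix (t_ k).1 (t_ k).2.
  exact/s_ok/mem_tnth.
have G_t k : all_in G (t_ k).1 by case: (t_ok k) => -[].
have M_sum : M = \sum_k cf k *: (t_ k).2.
  by apply: (can_inj mxvecK); rewrite Mcf linear_sum; apply: eq_bigr => k _; rewrite linearZ.
have -> : act_word d w v = \sum_k cf k *: act_word d (t_ k).1 v.
  apply: (@eq_on_weight_space _ (fun u => \sum_k cf k *: act_word d (t_ k).1 u)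
    (act_word_linear dvir zw.1) _ _ v (W_mu v Wv)) => [a x y|j].
    rewrite scaler_sumr -big_split; apply: eq_bigr => k _ /=.
    by rewrite (act_word_linear dvir (G_t k)) scalerDr !scalerA mulrC.
  rewrite wM M_sum (eq_bigr (fun i => \sum_k (cf k * (t_ k).2 j i) *: sp`_i)); last first.
    by move=> i _; rewrite summxE scaler_suml; apply: eq_bigr => k _; rewrite !mxE.
  rewrite exchange_big; apply: eq_bigr => k _ /=.
  by rewrite (proj2 (t_ok k)) scaler_sumr; apply: eq_bigr => i _; rewrite scalerA.
apply: (subspace_sum sW) => k _; apply: (subspaceZ sW); apply: W_ws => //.
by apply/mapP; exists (t_ k); rewrite ?mem_tnth.
Qed.

End WeightSpaceWords.

(** * Properties forced by finite subsets of G *)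

Section Forcing.
Variables (F : fieldType) (G : F -> Prop).

Definition finitely_forced (P : (F -> Prop) -> Prop) :=
  exists2 L : seq F, all_in G L & forall H, all_in H L -> P H.

Lemma finitely_forced_mem x : G x -> finitely_forced (fun H => H x).
Proof.
by move=> Gx; exists [:: x] => [y|H /all_in_cons []]; rewrite ?inE => // /eqP ->.
Qed.

Lemma finitely_forced_and (P Q : (F -> Prop) -> Prop) :
  finitely_forced P -> finitely_forced Q -> finitely_forced (fun H => P H /\ Q H).
Proof.
move=> [L1 GL1 PL1] [L2 GL2 QL2]; exists (L1 ++ L2); first exact/all_in_cat.
by move=> H /all_in_cat [HL1 HL2]; split; [apply: PL1 | apply: QL2].
Qed.

Lemma finitely_forced_all (T : eqType) (A : seq T) (P : T -> (F -> Prop) -> Prop) :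
  (forall a, a \in A -> finitely_forced (P a)) ->
  finitely_forced (fun H => forall a, a \in A -> P a H).
Proof.
elim: A => [|a A IH] PA; first by exists [::].
have [|L GL PL] := finitely_forced_and (PA a (mem_head a A)) (IH _).
  by move=> b bA; apply: PA; rewrite inE bA orbT.
by exists L => // H /PL [Pa PA'] b; rewrite inE => /predU1P [->|/PA'].
Qed.

End Forcing.

Section ForcedProperties.
Variables (F : fieldType) (V : lmodType F) (G : F -> Prop) (c : F) (d : F -> V -> V).
Hypothesis sgG : subgroup G.
Hypothesis dvir : vir_module G c d.
Hypothesis irrV : irreducible G d.

Local Notation Wt := (weight_space d).

Lemma finitely_forced_Uact W v : Uact G d W v -> finitely_forced G (fun H => Uact H d W v).
Proof.
move=> [s [hs v_sum]]; exists (flatten [seq t.1.2 | t <- s]).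
  by move=> x /flattenP [_ /mapP [t /hs [Gt _] ->] /Gt].
move=> H HL; exists s; split=> // t st; split; last by case: (hs t st).
by move=> x xt; apply: HL; apply/flattenP; exists t.1.2 => //; apply: map_f.
Qed.

Lemma finitely_forced_weight_span mu mu' : supp d mu -> fin_dim (Wt mu') ->
  finitely_forced G (fun H => forall v, Wt mu' v -> Uact H d (Wt mu) v).
Proof.
move=> [w [wnz Ww]] [sp [_ sp_span]].
have [L GL PL] := finitely_forced_all (fun v (_ : v \in sp) =>
  finitely_forced_Uact (Uact_full dvir irrV Ww wnz v)).
exists L => // H /PL Usp v /sp_span [a ->].
apply: (subspace_sum (Uact_subspace _ _ _)) => i _; apply: (subspaceZ (Uact_subspace _ _ _)).
by apply: Usp; apply: mem_nth.
Qed.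

Lemma finitely_forced_irreducible_U0 mu : supp d mu -> fin_dim (Wt mu) ->
  finitely_forced G (fun H => irreducible_U0 H d mu).
Proof.
move=> supp_mu [sp [sp_mu sp_span]].
have [ws zws ws_gen] := zero_weight_words_finite sgG dvir sp_mu sp_span.
exists (flatten ws).
  by move=> x /flattenP [w /zws [Gw _] /Gw].
move=> H Hws; split=> [|W W_mu sW W_closed]; first exact: supp_mu.
case: (pselect (exists2 w, W w & w != 0)) => [[w Ww wnz]|W0]; [right|left]; last first.
  by move=> v Wv; apply: contrapT => vnz; apply: W0; exists v => //; apply/eqP.
apply: (weight_space_generated sgG dvir irrV W_mu sW _ Ww wnz) => u v Gu u0 Wv.
apply: (ws_gen W sW W_mu) (conj Gu u0) Wv => w' v' w'ws Wv'.
have [_ w'0] := zws w' w'ws; apply: W_closed w'0 Wv' => x xw'.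
by apply: Hws; apply/flattenP; exists w'.
Qed.

Lemma finitely_forced_weight_pair mu mu' :
  supp d mu -> supp d mu' -> fin_dim (Wt mu) -> fin_dim (Wt mu') ->
  finitely_forced G (fun H => [/\ irreducible_U0 H d mu,
                                  forall v, Wt mu' v -> Uact H d (Wt mu) v
                                & H (mu - mu')]).
Proof.
move=> supp_mu supp_mu' fd_mu fd_mu'.
have [L GL PL] := finitely_forced_and (finitely_forced_irreducible_U0 supp_mu fd_mu)
  (finitely_forced_and (finitely_forced_weight_span supp_mu fd_mu')
     (finitely_forced_mem (supp_subG sgG dvir irrV supp_mu supp_mu'))).
by exists L => // H /PL [? []].
Qed.

End ForcedProperties.

Theorem lemma3p1 (R : realType) (G : R[i] -> Prop) (V : lmodType R[i])
  (c : R[i]) (d : R[i] -> V -> V) :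
  subgroup G -> rank_ge G 2 ->
  vir_module G c d -> harish_chandra d ->
  nontrivial G c d -> irreducible G d ->
  forall I : seq R[i], (forall mu, mu \in I -> supp d mu) ->
  exists GI : R[i] -> Prop,
    [/\ subgroup GI, (forall x, GI x -> G x),
        (exists k : nat, (0 < k)%N /\ iso_Zk GI k),
        (forall mu mu', mu \in I -> mu' \in I ->
           (forall v, Uact GI d (weight_space d mu) v <->
                      Uact GI d (weight_space d mu') v)
           /\ GI (mu - mu'))
      & (forall mu, mu \in I -> irreducible_U0 GI d mu)].
Proof.
move=> sgG [g [gG [gnz _]]] dvir [_ fdV] _ irrV I suppI.
pose P (p : R[i] * R[i]) H := [/\ irreducible_U0 H d p.1,
  forall v, weight_space d p.2 v -> Uact H d (weight_space d p.1) v & H (p.1 - p.2)].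
have pairI mu mu' : mu \in I -> mu' \in I -> (mu, mu') \in [seq (x, y) | x <- I, y <- I].
  by move=> muI mu'I; apply/allpairsP; exists (mu, mu').
have [L GL PL] : finitely_forced G
    (fun H => forall p, p \in [seq (x, y) | x <- I, y <- I] -> P p H).
  apply: finitely_forced_all => _ /allpairsP [[mu mu'] [muI mu'I ->]].
  exact: (finitely_forced_weight_pair sgG dvir irrV (suppI _ muI) (suppI _ mu'I)
                                      (fdV mu) (fdV mu')).
pose GI := zspan (g ord0 :: L).
have GI_G x : GI x -> G x by apply: zspan_min => //; apply/all_in_cons.
have PGI p : p \in [seq (x, y) | x <- I, y <- I] -> P p GI.
  by apply: PL => x xL; apply: mem_zspan; rewrite inE xL orbT.
exists GI; split => //.
- exact: zspan_subgroup.
- have [[|k] GIk] := zspan_isoZ (g ord0 :: L); last by exists k.+1; split; last exact: GIk.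
  by case/eqP: (gnz ord0); apply: isoZ0_eq0 GIk _; apply/mem_zspan/mem_head.
- move=> mu mu' muI mu'I; have [_ mu'_mu GImu] := PGI _ (pairI _ _ muI mu'I).
  have [_ mu_mu' _] := PGI _ (pairI _ _ mu'I muI).
  by split=> // v; split; apply: (Uact_trans dvir GI_G).
- by move=> mu muI; have [] := PGI _ (pairI _ _ muI muI).
Qed.
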